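(* Consider stochastic momentum gradient descent on a 2-layer diagonal linear network as described in the context. Assume that the iterates $(u_k,v_k)$ converge to $(u_\infty,v_\infty)$, let $\theta^{\mathrm{SMGD}}=u_\infty\odot v_\infty$, assume that $\Delta_\infty=|u_\infty^2-v_\infty^2|$ has nonzero coordinates, and that no coordinate of $w_{\pm,k}$ is ever exactly zero. Then $\theta^{\mathrm{SMGD}}$ interpolates the dataset and $$\theta^{\mathrm{SMGD}}=\arg\min_{\theta^\star\in\mathcal{S}}D_{\psi_{\Delta_\infty}}(\theta^\star,\tilde\theta_0),$$ where $\Delta_\infty=\Delta_0\odot\exp\big(-(S_++S_-)\big)$ and $\tilde\theta_0=\frac14\big(w_{+,0}^2\odot\exp(-2S_+)-w_{-,0}^2\odot\exp(-2S_-)\big)$.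
   Context: Data $x_1,\dots,x_n\in\mathbb{R}^d$, $y\in\mathbb{R}^n$, interpolators $\mathcal{S}=\{\theta:\langle\theta,x_i\rangle=y_i\ \forall i\}$. For a batch $\mathcal B\subset[n]$ of size $B$, $L_{\mathcal B}(\theta)=\frac{1}{2B}\sum_{i\in\mathcal B}(y_i-\langle x_i,\theta\rangle)^2$. Vector operations are coordinate-wise. Stochastic momentum gradient descent with $\gamma>0$, $\beta\in[0,1)$ and batches $\mathcal B_k\subset[n]$ of size $B\in[n]$ sampled with or without replacement: $u_{k+1}=u_k-\gamma\nabla L_{\mathcal B_k}(\theta_k)\odot v_k+\beta(u_k-u_{k-1})$, $v_{k+1}=v_k-\gamma\nabla L_{\mathcal B_k}(\theta_k)\odot u_k+\beta(v_k-v_{k-1})$, $\theta_k=u_k\odot v_k$, with $u_1=u_0$, $v_1=v_0$. $w_{\pm,k}=u_k\pm v_k$, $\Delta_k=|u_k^2-v_k^2|$. $S_\pm=\frac{1}{1-\beta}\sum_{k=1}^\infty[r(w_{\pm,k+1}/w_{\pm,k})+\beta r(w_{\pm,k}/w_{\pm,k+1})]$ with $r(z)=(z-1)-\ln|z|$. Hyperbolic entropy: for $\Delta\in(0,\infty)^d$, $\psi_\Delta(\theta)=\frac14\sum_{i=1}^d\big(2\theta_i\mathrm{arcsinh}(2\theta_i/\Delta_i)-\sqrt{4\theta_i^2+\Delta_i^2}+\Delta_i\big)$; Bregman divergence $D_\Phi(\theta_1,\theta_2)=\Phi(\theta_1)-\Phi(\theta_2)-\langle\nabla\Phi(\theta_2),\theta_1-\theta_2\rangle$.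 *)

From HB Require Import structures.
From mathcomp Require Import all_boot all_order all_algebra.
From mathcomp Require Import all_classical all_reals all_analysis.
Set Implicit Arguments. Unset Strict Implicit. Unset Printing Implicit Defensive.
Import Order.TTheory GRing.Theory Num.Theory.
Local Open Scope ring_scope.

Definition dotv (R : realType) (d : nat) (a b : 'I_d -> R) : R :=
  \sum_(j < d) a j * b j.

Definition interpolators (R : realType) (n d : nat)
  (x : 'I_n -> 'I_d -> R) (y : 'I_n -> R) : set ('I_d -> R) :=
  [set th | forall i : 'I_n, dotv th (x i) = y i].

(* Batch loss L_B(theta) = 1/(2B) sum_{i in batch} (y_i - <x_i,theta>)^2.
   A batch is a map 'I_B -> 'I_n (entries may repeat: sampling with
   replacement; injective maps: sampling without replacement). *)
Definition batch_loss (R : realType) (n d B : nat)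
  (x : 'I_n -> 'I_d -> R) (y : 'I_n -> R) (b : 'I_B -> 'I_n)
  (th : 'I_d -> R) : R :=
  (2 * B%:R)^-1 * \sum_(m < B) (y (b m) - dotv (x (b m)) th) ^+ 2.

Definition grad (R : realType) (d : nat) (Phi : ('I_d -> R) -> R)
  (th : 'I_d -> R) : 'I_d -> R :=
  fun j => derive1 (fun t : R => Phi (fun i => if i == j then t else th i)) (th j).

Definition bregman (R : realType) (d : nat) (Phi : ('I_d -> R) -> R)
  (th1 th2 : 'I_d -> R) : R :=
  Phi th1 - Phi th2 - dotv (grad Phi th2) (fun j => th1 j - th2 j).

Definition arcsinh (R : realType) (z : R) : R := ln (z + Num.sqrt (z ^+ 2 + 1)).

Definition hyp_entropy (R : realType) (d : nat) (Delta : 'I_d -> R)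
  (th : 'I_d -> R) : R :=
  4^-1 * \sum_(i < d) (2 * th i * arcsinh (2 * th i / Delta i)
                        - Num.sqrt (4 * th i ^+ 2 + Delta i ^+ 2) + Delta i).

Definition rfun (R : realType) (z : R) : R := (z - 1) - ln `|z|.

(* Summand of S_pm (before the factor 1/(1-beta)) for a scalar sequence w:
   r(w_{k+1}/w_k) + beta r(w_k/w_{k+1}). *)
Definition S_term (R : realType) (beta : R) (w : nat -> R) (k : nat) : R :=
  rfun (w k.+1 / w k) + beta * rfun (w k / w k.+1).

(* Write w± = u ± v.  The two momentum recursions decouple into
   w±_{k+1} = w±_k ∓ γ g_k w±_k + β (w±_k - w±_{k-1}), where g_k is the batch
   gradient at θ_k.  Dividing by w±_k, the S-terms telescope:
   Σ_k S-term(w±) ± Σ_k γ g_k = -(1-β) ln|w±_{K+1}/w±_0| + o(1).  The S-terms are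
   eventually nonnegative and the two telescoped sums add up to a convergent
   sequence, so S±, and with them G = Σ_k γ g_k, converge; this yields
   |w±_∞| e^{±G/(1-β)} = |w±_0| e^{-S±}, hence Δ_∞ = Δ_0 e^{-(S+ + S-)}.
   In the coordinates θ = (A² - B²)/4, Δ = A B the mirror map of ψ_Δ is
   ∇ψ_Δ(θ) = ½ ln (A / B), so ∇ψ(θ̃_0) - ∇ψ(θ_∞) = G/(1-β) coordinatewise:
   a limit of combinations of batch gradients, hence orthogonal to every
   difference of interpolators.  Convergence of the iterates forces the batch
   gradients to vanish, and since every sample is visited infinitely often,
   θ_∞ interpolates; the three-point identity for Bregman divergences and strict
   convexity of ψ_Δ then make θ_∞ the unique minimizer. *)

From HB Require Import structures.
From mathcomp Require Import all_boot all_order all_algebra.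
From mathcomp Require Import all_classical all_reals all_analysis.
From mathcomp Require Import lra ring.
Import Order.TTheory GRing.Theory Num.Theory.
Import numFieldNormedType.Exports.
Local Open Scope classical_set_scope.
Local Open Scope ring_scope.
Set Implicit Arguments. Unset Strict Implicit.

Section HyperbolicEntropy.
Variable R : realType.
Implicit Types (z s t a b A B D : R).

Lemma sqrD1_gt0 z : 0 < z ^+ 2 + 1.
Proof. by rewrite ltr_wpDl ?sqr_ge0. Qed.

Lemma norm_lt_sqrt_sqrD1 z : `|z| < Num.sqrt (z ^+ 2 + 1).
Proof. by rewrite -sqrtr_sqr ltr_sqrt ?sqrD1_gt0 ?ltrDl. Qed.

Lemma arcsinh_arg_gt0 z : 0 < z + Num.sqrt (z ^+ 2 + 1).
Proof. by have := norm_lt_sqrt_sqrD1 z; have := ler_norm (- z); rewrite normrN; lra. Qed.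

Lemma is_derive_arcsinh z :
  is_derive z 1 (@arcsinh R) (Num.sqrt (z ^+ 2 + 1))^-1.
Proof.
have sqrt_gt0 : 0 < Num.sqrt (z ^+ 2 + 1) by rewrite sqrtr_gt0 sqrD1_gt0.
have arg_gt0 := arcsinh_arg_gt0 z.
have dsq : is_derive z 1 (fun t : R => t ^+ 2 + 1) (2 * z).
  by apply: is_derive_eq; rewrite addr0 -scalerDl scaler1 -mulr2n mulr_natl.
have dsqrt : is_derive z 1 (Num.sqrt \o (fun t : R => t ^+ 2 + 1))
    ((2 * Num.sqrt (z ^+ 2 + 1))^-1 * (2 * z)).
  by apply: is_derive1_comp; apply: is_derive1_sqrt; rewrite sqrD1_gt0.
have darg : is_derive z 1 (fun t : R => t + Num.sqrt (t ^+ 2 + 1))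
    (1 + (2 * Num.sqrt (z ^+ 2 + 1))^-1 * (2 * z)) by apply: is_derive_eq.
(* The [is_derive] facts in the context are used by instance resolution. *)
rewrite [@arcsinh R](_ : _ = @ln R \o (fun t => t + Num.sqrt (t ^+ 2 + 1))) //.
apply: is_derive_eq; first by apply: is_derive1_comp; exact: is_derive1_ln.
by rewrite /=; field; rewrite !gt_eqF.
Qed.

Lemma expR_arcsinh z : expR (arcsinh z) = z + Num.sqrt (z ^+ 2 + 1).
Proof. by rewrite /arcsinh lnK // posrE arcsinh_arg_gt0. Qed.

Lemma expRN_arcsinh z : expR (- arcsinh z) = Num.sqrt (z ^+ 2 + 1) - z.
Proof.
have arg_neq0 : z + Num.sqrt (z ^+ 2 + 1) != 0 by rewrite gt_eqF ?arcsinh_arg_gt0.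
have sqrtK : Num.sqrt (z ^+ 2 + 1) ^+ 2 = z ^+ 2 + 1 by rewrite sqr_sqrtr ?ltW ?sqrD1_gt0.
rewrite expRN expR_arcsinh; apply: (mulfI arg_neq0); rewrite mulfV //.
rewrite (_ : _ * _ = Num.sqrt (z ^+ 2 + 1) ^+ 2 - z ^+ 2); last by ring.
by rewrite sqrtK; ring.
Qed.

Lemma sinh_arcsinh z : (expR (arcsinh z) - expR (- arcsinh z)) / 2 = z.
Proof. by rewrite expR_arcsinh expRN_arcsinh; field. Qed.

Lemma cosh_tangent_lt s t : s != t ->
  (t - s) * (expR s - expR (- s)) < (expR t + expR (- t)) - (expR s + expR (- s)).
Proof.
move=> neq_st; have ts_neq0 : t - s != 0 by rewrite subr_eq0 eq_sym.
have lt_pos := expR_gt1Dx ts_neq0.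
have lt_neg : 1 + - (t - s) < expR (- (t - s)) by rewrite expR_gt1Dx ?oppr_eq0.
have -> : expR t = expR (t - s) * expR s by rewrite -expRD subrK.
have -> : expR (- t) = expR (- (t - s)) * expR (- s) by rewrite -expRD -opprD subrK.
have := expR_gt0 s; have := expR_gt0 (- s).
move: (expR s) (expR (- s)) (expR (t - s)) (expR (- (t - s))) lt_pos lt_neg.
move: (t - s) => h X X' E E' ltE ltE' X'_gt0 X_gt0.
have : X' * (1 + - h) < X' * E' by rewrite ltr_pM2l.
have : X * (1 + h) < X * E by rewrite ltr_pM2l.
lra.
Qed.

Definition hyp_entropy1 D t : R :=
  2 * t * arcsinh (2 * t / D) - Num.sqrt (4 * t ^+ 2 + D ^+ 2) + D.

Lemma hyp_entropyE d (Delta th : 'I_d -> R) :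
  hyp_entropy Delta th = 4^-1 * \sum_(i < d) hyp_entropy1 (Delta i) (th i).
Proof. by []. Qed.

Lemma sqrt_hyp_entropy1 D t : 0 < D ->
  Num.sqrt (4 * t ^+ 2 + D ^+ 2) = D * Num.sqrt ((2 * t / D) ^+ 2 + 1).
Proof.
move=> D_gt0.
rewrite -[X in _ = X * _]gtr0_norm // -sqrtr_sqr -sqrtrM ?sqr_ge0 //.
by congr Num.sqrt; field; rewrite gt_eqF.
Qed.

Lemma is_derive_hyp_entropy1 D t : 0 < D ->
  is_derive t 1 (hyp_entropy1 D) (2 * arcsinh (2 * t / D)).
Proof.
move=> D_gt0.
have dlin : is_derive t 1 (fun s : R => 2 * s / D) (2 / D).
  by apply: is_derive_eq; rewrite /GRing.scale /=; field; rewrite gt_eqF.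
have dasinh : is_derive t 1 (@arcsinh R \o (fun s : R => 2 * s / D))
    ((Num.sqrt ((2 * t / D) ^+ 2 + 1))^-1 * (2 / D)).
  by apply: is_derive1_comp; exact: is_derive_arcsinh.
have dsq : is_derive t 1 (fun s : R => 4 * s ^+ 2 + D ^+ 2) (8 * t).
  by apply: is_derive_eq; rewrite /GRing.scale /=; ring.
have dsqrt : is_derive t 1 (Num.sqrt \o (fun s : R => 4 * s ^+ 2 + D ^+ 2))
    ((2 * Num.sqrt (4 * t ^+ 2 + D ^+ 2))^-1 * (8 * t)).
  apply: is_derive1_comp; apply: is_derive1_sqrt.
  by rewrite ltr_pwDr ?exprn_gt0 // mulr_ge0 ?sqr_ge0.
rewrite [hyp_entropy1 D](_ : _ = fun s => 2 * s * (@arcsinh R \o (fun s => 2 * s / D)) s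
    - (Num.sqrt \o (fun s => 4 * s ^+ 2 + D ^+ 2)) s + D) //.
apply: is_derive_eq; rewrite sqrt_hyp_entropy1 //= /GRing.scale /=.
have : 0 < Num.sqrt ((2 * t / D) ^+ 2 + 1) by rewrite sqrtr_gt0 sqrD1_gt0.
by move: (Num.sqrt _) => C C_gt0; field; rewrite !gt_eqF.
Qed.

Lemma grad_hyp_entropy d (Delta th : 'I_d -> R) (j : 'I_d) : 0 < Delta j ->
  grad (hyp_entropy Delta) th j = 2^-1 * arcsinh (2 * th j / Delta j).
Proof.
move=> Dj_gt0; rewrite /grad.
set c := \sum_(i < d | i != j) hyp_entropy1 (Delta i) (th i).
rewrite (_ : (fun t => _) = fun t => 4^-1 * (hyp_entropy1 (Delta j) t + c)).
  have := is_derive_hyp_entropy1 (th j) Dj_gt0.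
  rewrite derive1E => dh; apply: derive_val; apply: is_derive_eq.
  by rewrite /GRing.scale /=; field.
apply/funext => t; rewrite hyp_entropyE (bigD1 j) //= eqxx /c.
by congr (_ * (_ + _)); apply: eq_bigr => i /negbTE ->.
Qed.

Lemma hyp_entropy1_tangent_lt D a b : 0 < D -> a != b ->
  hyp_entropy1 D b + 2 * arcsinh (2 * b / D) * (a - b) < hyp_entropy1 D a.
Proof.
move=> D_gt0 neq_ab; rewrite -subr_gt0 /hyp_entropy1 !sqrt_hyp_entropy1 //.
have eq_a : a = D * (2 * a / D) / 2 by field; rewrite gt_eqF.
have eq_b : b = D * (2 * b / D) / 2 by field; rewrite gt_eqF.
have neq_ab' : arcsinh (2 * a / D) != arcsinh (2 * b / D).
  apply: contra neq_ab => /eqP eq_asinh.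
  by rewrite eq_a eq_b -[2 * a / D]sinh_arcsinh -[2 * b / D]sinh_arcsinh eq_asinh.
have := cosh_tangent_lt neq_ab'.
rewrite !expR_arcsinh !expRN_arcsinh.
move: (2 * a / D) (2 * b / D) eq_a eq_b neq_ab' => p q -> -> _.
move: (arcsinh p) (arcsinh q) (Num.sqrt (p ^+ 2 + 1)) (Num.sqrt (q ^+ 2 + 1)) => s s' C C'.
move=> lt_cosh.
have : 0 < D * ((C' - C) - (s' - s) * p) by rewrite mulr_gt0 //; lra.
by congr (0 < _); field.
Qed.

Lemma arcsinh_sqr_diff (A B : R) : 0 < A -> 0 < B ->
  arcsinh ((A ^+ 2 - B ^+ 2) / (2 * (A * B))) = ln A - ln B.
Proof.
move=> A_gt0 B_gt0.
have sqrt_eq : Num.sqrt (((A ^+ 2 - B ^+ 2) / (2 * (A * B))) ^+ 2 + 1)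
    = (A ^+ 2 + B ^+ 2) / (2 * (A * B)).
  rewrite -[RHS]ger0_norm; last first.
    by rewrite divr_ge0 ?addr_ge0 ?sqr_ge0 // mulr_ge0 // mulr_ge0 // ltW.
  by rewrite -sqrtr_sqr; congr Num.sqrt; field; rewrite !gt_eqF.
rewrite /arcsinh sqrt_eq -ln_div ?posrE //.
by congr ln; field; rewrite !gt_eqF.
Qed.

Lemma grad_hyp_entropy_sqr_diff d (Delta th : 'I_d -> R) (j : 'I_d) (A B : R) :
  0 < A -> 0 < B -> Delta j = A * B -> th j = 4^-1 * (A ^+ 2 - B ^+ 2) ->
  grad (hyp_entropy Delta) th j = 2^-1 * (ln A - ln B).
Proof.
move=> A_gt0 B_gt0 eq_Delta eq_th.
rewrite grad_hyp_entropy ?eq_Delta ?mulr_gt0 // eq_th -arcsinh_sqr_diff //.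
by congr (_ * arcsinh _); field; rewrite !gt_eqF.
Qed.

Lemma grad_hyp_entropy_expR_shift d (Delta th th' : 'I_d -> R) (j : 'I_d) (A B c : R) :
  0 < A -> 0 < B -> Delta j = A * B -> th j = 4^-1 * (A ^+ 2 - B ^+ 2) ->
  th' j = 4^-1 * ((A * expR c) ^+ 2 - (B * expR (- c)) ^+ 2) ->
  grad (hyp_entropy Delta) th' j = grad (hyp_entropy Delta) th j + c.
Proof.
move=> A_gt0 B_gt0 eq_Delta eq_th eq_th'.
rewrite (grad_hyp_entropy_sqr_diff A_gt0 B_gt0 eq_Delta eq_th).
rewrite (grad_hyp_entropy_sqr_diff _ _ _ eq_th') ?mulr_gt0 ?expR_gt0 //.
  by rewrite !lnM ?posrE ?expR_gt0 // !expRK; field.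
by rewrite mulrACA -expRD subrr expR0 mulr1.
Qed.

Lemma bregman_hyp_entropy_gt0 d (Delta a b : 'I_d -> R) :
  (forall j, 0 < Delta j) -> a <> b -> 0 < bregman (hyp_entropy Delta) a b.
Proof.
move=> Delta_gt0 neq_ab.
have /existsNP [j0 /eqP neq_j0] : ~ (forall j, a j = b j).
  by move=> eq_ab; apply: neq_ab; apply/funext.
set E := fun j => hyp_entropy1 (Delta j) (a j)
  - (hyp_entropy1 (Delta j) (b j) + 2 * arcsinh (2 * b j / Delta j) * (a j - b j)).
have -> : bregman (hyp_entropy Delta) a b = 4^-1 * \sum_(j < d) E j.
  rewrite /bregman /dotv !hyp_entropyE !mulr_sumr -!sumrB.
  by apply: eq_bigr => j _; rewrite grad_hyp_entropy // /E; field.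
have E_gt0 j : a j != b j -> 0 < E j.
  by move=> neq; rewrite subr_gt0 hyp_entropy1_tangent_lt.
rewrite pmulr_rgt0 // (bigD1 j0) //= ltr_pwDl ?E_gt0 //.
apply: sumr_ge0 => j _; have [eq|neq] := eqVneq (a j) (b j); last exact/ltW/E_gt0.
by rewrite /E eq subrr mulr0 addr0 subrr.
Qed.
End HyperbolicEntropy.

Section Bregman.
Variables (R : realType) (d : nat) (Phi : ('I_d -> R) -> R).

Lemma bregman_subr (a b c : 'I_d -> R) :
  bregman Phi a c - bregman Phi b c =
  bregman Phi a b + dotv (fun j => grad Phi b j - grad Phi c j) (fun j => a j - b j).
Proof.
rewrite /bregman /dotv.
have -> : \sum_(j < d) (grad Phi b j - grad Phi c j) * (a j - b j) =
    \sum_(j < d) grad Phi b j * (a j - b j)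
    - (\sum_(j < d) grad Phi c j * (a j - c j) - \sum_(j < d) grad Phi c j * (b j - c j)).
  by rewrite -!sumrB; apply: eq_bigr => j _; ring.
ring.
Qed.

Lemma bregman_lt_of_grad_shift (c a th th0 : 'I_d -> R) :
  (forall a b, a <> b -> 0 < bregman Phi a b) ->
  (forall j, grad Phi th0 j = grad Phi th j + c j) ->
  dotv c (fun j => a j - th j) = 0 -> a <> th ->
  bregman Phi th th0 < bregman Phi a th0.
Proof.
move=> bregman_gt0 grad_shift orth neq_a; rewrite -subr_gt0 bregman_subr.
have -> : dotv (fun j => grad Phi th j - grad Phi th0 j) (fun j => a j - th j) =
    - dotv c (fun j => a j - th j).
  by rewrite /dotv -sumrN; apply: eq_bigr => j _; rewrite grad_shift; ring.
by rewrite orth oppr0 addr0 bregman_gt0.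
Qed.
End Bregman.

Section DotProduct.
Variables (R : realType) (d : nat).

Lemma dotvC (a b : 'I_d -> R) : dotv a b = dotv b a.
Proof. by apply: eq_bigr => j _; rewrite mulrC. Qed.

Lemma dotvZl (k : R) (a b : 'I_d -> R) : dotv (fun j => k * a j) b = k * dotv a b.
Proof. by rewrite /dotv mulr_sumr; apply: eq_bigr => j _; rewrite mulrA. Qed.

Lemma dotv_update (a th : 'I_d -> R) (j : 'I_d) (t : R) :
  dotv a (fun i => if i == j then t else th i) = dotv a th + a j * (t - th j).
Proof.
rewrite /dotv (bigD1 j) //= eqxx [in RHS](bigD1 j) //=.
rewrite (eq_bigr (fun i => a i * th i)) => [|i /negbTE -> //]; ring.
Qed.

Lemma cvg_dotv (a b : nat -> 'I_d -> R) (la lb : 'I_d -> R) :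
  (forall j, (fun k => a k j) @ \oo --> la j) ->
  (forall j, (fun k => b k j) @ \oo --> lb j) ->
  (fun k => dotv (a k) (b k)) @ \oo --> dotv la lb.
Proof.
move=> a_cvg b_cvg; apply: cvg_big => [|j _]; first exact: add_continuous.
exact: cvgM.
Qed.

Lemma dotv_partial_sums_eq0 (a : nat -> 'I_d -> R) (G w : 'I_d -> R) :
  (forall k, dotv (a k) w = 0) ->
  (forall j, (fun K => \sum_(1 <= k < K.+1) a k j) @ \oo --> G j) ->
  dotv G w = 0.
Proof.
move=> orth sums_cvg.
have dotv_cvg : (fun K => dotv (fun j => \sum_(1 <= k < K.+1) a k j) w) @ \oo --> dotv G w.
  by apply: cvg_dotv => // j; exact: cvg_cst.
have dotv_cvg0 : (fun K => dotv (fun j => \sum_(1 <= k < K.+1) a k j) w) @ \oo --> 0.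
  rewrite (_ : (fun K => _) = fun=> 0); first exact: cvg_cst.
  apply/funext => K; rewrite /dotv; under eq_bigr do rewrite mulr_suml.
  by rewrite exchange_big big1 // => k _; exact: orth.
by rewrite -(cvg_lim _ dotv_cvg) // (cvg_lim _ dotv_cvg0).
Qed.
End DotProduct.

Section BatchLoss.
Variables (R : realType) (n d B : nat) (x : 'I_n -> 'I_d -> R) (y : 'I_n -> R).

Hypothesis B_gt0 : (0 < B)%N.

Lemma grad_batch_loss (b : 'I_B -> 'I_n) (th : 'I_d -> R) (j : 'I_d) :
  grad (batch_loss x y b) th j =
  - (B%:R)^-1 * \sum_(m < B) (y (b m) - dotv (x (b m)) th) * x (b m) j.
Proof.
rewrite /grad.
set P := \sum_(m < B) (y (b m) - dotv (x (b m)) th) ^+ 2.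
set Q := \sum_(m < B) (y (b m) - dotv (x (b m)) th) * x (b m) j.
set W := \sum_(m < B) x (b m) j ^+ 2.
rewrite (_ : (fun t => _) =
    fun t => (2 * B%:R)^-1 * (P - 2 * (t - th j) * Q + (t - th j) ^+ 2 * W)).
  have B_neq0 : (B%:R : R) != 0 by rewrite pnatr_eq0 -lt0n.
  rewrite derive1E; apply: derive_val; apply: is_derive_eq.
  by rewrite /GRing.scale /= subrr; field.
apply/funext => t; rewrite /batch_loss; congr (_ * _).
rewrite /P /Q /W !mulr_sumr -sumrB -big_split /=.
by apply: eq_bigr => m _; rewrite dotv_update; ring.
Qed.

Lemma dotv_grad_batch_loss (b : 'I_B -> 'I_n) (th a c : 'I_d -> R) :
  dotv (grad (batch_loss x y b) th) (fun j => a j - c j) =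
  - (B%:R)^-1 * \sum_(m < B) (y (b m) - dotv (x (b m)) th) *
      (dotv (x (b m)) a - dotv (x (b m)) c).
Proof.
rewrite /dotv; under eq_bigr => j _ do rewrite grad_batch_loss -mulrA mulr_suml.
rewrite -mulr_sumr exchange_big /=; congr (_ * _); apply: eq_bigr => m _.
by rewrite -sumrB mulr_sumr; apply: eq_bigr => j _; rewrite /dotv; ring.
Qed.

Lemma dotv_grad_batch_loss_interpolators (b : 'I_B -> 'I_n) (th a c : 'I_d -> R) :
  interpolators x y a -> interpolators x y c ->
  dotv (grad (batch_loss x y b) th) (fun j => a j - c j) = 0.
Proof.
move=> a_int c_int; rewrite dotv_grad_batch_loss big1 ?mulr0 // => m _.
by rewrite ![dotv (x _) _]dotvC a_int c_int subrr mulr0.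
Qed.

Lemma dotv_grad_batch_loss_residual (b : 'I_B -> 'I_n) (th c : 'I_d -> R) :
  interpolators x y c ->
  dotv (grad (batch_loss x y b) th) (fun j => th j - c j) =
  (B%:R)^-1 * \sum_(m < B) (y (b m) - dotv (x (b m)) th) ^+ 2.
Proof.
move=> c_int; rewrite dotv_grad_batch_loss mulNr -mulrN -sumrN.
by congr (_ * _); apply: eq_bigr => m _; rewrite [dotv _ c]dotvC c_int; ring.
Qed.
End BatchLoss.

Section Interpolation.
Variable R : realType.

Lemma le_lim_frequently (f h : nat -> R) (lf lh : R) :
  f @ \oo --> lf -> h @ \oo --> lh ->
  (forall N, exists2 k, (N <= k)%N & f k <= h k) -> lf <= lh.
Proof.
move=> f_cvg h_cvg freq; rewrite leNgt; apply/negP => lt_hf.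
have lt_mid_f : (lf + lh) / 2 < lf by lra.
have lt_h_mid : lh < (lf + lh) / 2 by lra.
have [Nf _ f_gt] := cvgr_gt _ f_cvg _ lt_mid_f.
have [Nh _ h_lt] := cvgr_lt _ h_cvg _ lt_h_mid.
have [k le_k le_fh] := freq (maxn Nf Nh).
have := f_gt k (leq_trans (leq_maxl _ _) le_k).
have := h_lt k (leq_trans (leq_maxr _ _) le_k).
rewrite /=; lra.
Qed.

Lemma limit_interpolates n d B (x : 'I_n -> 'I_d -> R) (y : 'I_n -> R)
    (batch : nat -> 'I_B -> 'I_n) (th : nat -> 'I_d -> R) (thinf : 'I_d -> R) :
  (0 < B)%N -> (exists th_star, interpolators x y th_star) ->
  (forall (i : 'I_n) (N : nat), exists k m, (N <= k)%N /\ batch k m = i) ->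
  (forall j, (fun k => th k j) @ \oo --> thinf j) ->
  (forall j, (fun k => grad (batch_loss x y (batch k)) (th k) j) @ \oo --> 0) ->
  interpolators x y thinf.
Proof.
move=> B_gt0 [th_star star_int] freq th_cvg grad_cvg i.
have invB_gt0 : 0 < (B%:R : R)^-1 by rewrite invr_gt0 ltr0n.
have res_cvg : (fun k => y i - dotv (x i) (th k)) @ \oo --> y i - dotv (x i) thinf.
  by apply: cvgB; [exact: cvg_cst | apply: cvg_dotv => // j; exact: cvg_cst].
have loss_cvg : (fun k => dotv (grad (batch_loss x y (batch k)) (th k))
    (fun j => th k j - th_star j)) @ \oo --> 0.
  suff <- : dotv (fun=> 0) (fun j => thinf j - th_star j) = 0.
    exact: cvg_dotv grad_cvg (fun j => cvgB (th_cvg j) (cvg_cst (th_star j))).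
  by rewrite /dotv big1 // => j _; rewrite mul0r.
have : (B%:R)^-1 * (y i - dotv (x i) thinf) ^+ 2 <= 0.
  apply: (le_lim_frequently _ loss_cvg); first exact: cvgM (cvg_cst _) (cvgM res_cvg res_cvg).
  move=> N; have [k [m [le_Nk batch_ki]]] := freq i N; exists k => //.
  rewrite dotv_grad_batch_loss_residual // ler_pM2l // (bigD1 m) //= batch_ki lerDl.
  by apply: sumr_ge0 => m' _; exact: sqr_ge0.
rewrite pmulr_rle0 // => res_le0.
by apply/eqP; rewrite dotvC eq_sym -subr_eq0 -sqrf_eq0 eq_le res_le0 sqr_ge0.
Qed.
End Interpolation.

Section Sequences.
Variable R : realType.

Lemma cvg_ln_norm (w : nat -> R) (l : R) : l != 0 -> w @ \oo --> l ->
  (fun k => ln `|w k|) @ \oo --> ln `|l|.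
Proof.
move=> l_neq0 w_cvg; apply: continuous_cvg; last exact: cvg_norm.
by apply: continuous_ln; rewrite normr_gt0.
Qed.

Lemma cvg_ratioS (w : nat -> R) (l : R) : l != 0 -> w @ \oo --> l ->
  (fun k => w k / w k.+1) @ \oo --> (1 : R).
Proof.
move=> l_neq0 w_cvg; have wS_cvg := w_cvg; rewrite -cvg_shiftS in wS_cvg.
by rewrite -(divff l_neq0); apply: cvgM => //; exact: cvgV.
Qed.

Lemma cvgn_nondecreasing_addr (s t : nat -> R) (l : R) :
  nondecreasing_seq s -> nondecreasing_seq t ->
  (fun k => s k + t k) @ \oo --> l -> cvgn s.
Proof.
move=> s_nd t_nd st_cvg.
have st_nd : nondecreasing_seq (fun k => s k + t k).
  by move=> m n le_mn; rewrite lerD ?s_nd ?t_nd.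
apply: nondecreasing_is_cvgn => //; exists (l - t 0%N) => _ [k _ <-].
have := nondecreasing_cvgn_le st_nd (cvgP _ st_cvg) k.
rewrite (cvg_lim _ st_cvg) //; have := t_nd 0%N k (leq0n k); lra.
Qed.

Lemma near_nondecreasing_addr_cvgn (s t : nat -> R) (l : R) :
  (\forall K \near \oo, s K <= s K.+1) -> (\forall K \near \oo, t K <= t K.+1) ->
  (fun k => s k + t k) @ \oo --> l -> cvgn s.
Proof.
move=> [Ns _ s_nd] [Nt _ t_nd] st_cvg; set N := maxn Ns Nt.
suff : cvgn (fun k => s (k + N)%N).
  by move=> /cvg_ex [L]; rewrite cvg_shiftn => ?; apply/cvg_ex; exists L.
apply: (@cvgn_nondecreasing_addr _ (fun k => t (k + N)%N) l).
- apply/nondecreasing_seqP => k; rewrite addSn; apply: s_nd.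
  by rewrite /= (leq_trans (leq_maxl _ _) (leq_addl _ _)).
- apply/nondecreasing_seqP => k; rewrite addSn; apply: t_nd.
  by rewrite /= (leq_trans (leq_maxr _ _) (leq_addl _ _)).
- by move: st_cvg; rewrite -(cvg_shiftn N).
Qed.

Lemma near_nondecreasing_cvg_split (s t h : nat -> R) (l1 l2 : R) :
  (\forall K \near \oo, s K <= s K.+1) -> (\forall K \near \oo, t K <= t K.+1) ->
  (fun K => s K + h K) @ \oo --> l1 -> (fun K => t K - h K) @ \oo --> l2 ->
  exists2 P, s @ \oo --> P & h @ \oo --> l1 - P.
Proof.
move=> s_nd t_nd sh_cvg th_cvg.
have /cvg_ex [P s_cvg] : cvgn s.
  apply: (near_nondecreasing_addr_cvgn s_nd t_nd (l := l1 + l2)).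
  apply: cvg_trans (cvgD sh_cvg th_cvg); apply: near_eq_cvg; apply: nearW => K /=.
  by rewrite addrACA subrr addr0.
exists P => //; apply: cvg_trans (cvgB sh_cvg s_cvg); apply: near_eq_cvg.
by apply: nearW => K /=; rewrite addrC addKr.
Qed.
End Sequences.

Section MomentumSequence.
Variables (R : realType) (beta : R).

Lemma rfun1 : rfun (1 : R) = 0.
Proof. by rewrite /rfun normr1 ln1 subrr subr0. Qed.

Lemma rfun_ge0 (z : R) : 0 < z -> 0 <= rfun z.
Proof.
move=> z_gt0; rewrite /rfun gtr0_norm // subr_ge0.
by have := @le_ln1Dx R (z - 1); rewrite addrCA subrr addr0; apply; lra.
Qed.

Lemma rfun_div (a b : R) : a != 0 -> b != 0 ->
  rfun (a / b) = a / b - 1 - (ln `|a| - ln `|b|).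
Proof.
move=> a_neq0 b_neq0; rewrite /rfun normrM normrV ?unitfE // lnM ?lnV //.
all: by rewrite ?posrE ?invr_gt0 normr_gt0.
Qed.

Lemma near_nondecreasing_sum_S_term (w : nat -> R) (l : R) :
  0 <= beta -> l != 0 -> w @ \oo --> l ->
  \forall K \near \oo,
    \sum_(1 <= k < K.+1) S_term beta w k <= \sum_(1 <= k < K.+2) S_term beta w k.
Proof.
move=> beta_ge0 l_neq0 w_cvg.
have [N _ ratio_gt0] := cvgr_gt _ (cvg_ratioS l_neq0 w_cvg) _ (@ltr01 R).
exists N => // K /= le_NK; rewrite [leRHS]big_nat_recr //= lerDl.
have ratio_K : 0 < w K.+1 / w K.+2 by apply: ratio_gt0; exact: leqW.
by rewrite addr_ge0 ?mulr_ge0 ?rfun_ge0 // -invf_div invr_gt0.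
Qed.

Lemma cvg_momentum_increment (w : nat -> R) (l : R) : w @ \oo --> l ->
  (fun k => w k - w k.+1 + beta * (w k - w k.-1)) @ \oo --> 0.
Proof.
move=> w_cvg; have wS_cvg := w_cvg; rewrite -cvg_shiftS in wS_cvg.
have wP_cvg : (fun k => w k.-1) @ \oo --> l by rewrite -cvg_shiftS.
rewrite -(subrr l) -[X in _ --> X]addr0 -(mulr0 beta) -(subrr l).
exact: cvgD (cvgB w_cvg wS_cvg) (cvgM (cvg_cst _) (cvgB w_cvg wP_cvg)).
Qed.

Variables (w c : nat -> R).
Hypothesis w_neq0 : forall k, w k != 0.
Hypothesis w1 : w 1%N = w 0%N.
Hypothesis w_rec :
  forall k, (1 <= k)%N -> w k.+1 = w k - c k * w k + beta * (w k - w k.-1).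

Lemma sum_S_termD K :
  \sum_(1 <= k < K.+1) S_term beta w k + \sum_(1 <= k < K.+1) c k =
  - (1 - beta) * (ln `|w K.+1| - ln `|w 0%N|)
  - beta * (ln `|w K.+1| - ln `|w K|) + beta * rfun (w K / w K.+1).
Proof.
elim: K => [|K IH]; first by rewrite !big_geq // w1 divff // rfun1; ring.
rewrite !(big_nat_recr K.+1) //= addrACA IH.
have ratio : w K.+2 / w K.+1 = 1 - c K.+1 + beta * (1 - w K / w K.+1).
  by rewrite w_rec //=; field.
rewrite /S_term (rfun_div (w_neq0 K.+2)) // (rfun_div (w_neq0 K)) // ratio.
ring.
Qed.

Lemma cvg_sum_S_termD (l : R) : l != 0 -> w @ \oo --> l ->
  (fun K => \sum_(1 <= k < K.+1) S_term beta w k + \sum_(1 <= k < K.+1) c k)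
    @ \oo --> - (1 - beta) * (ln `|l| - ln `|w 0%N|).
Proof.
move=> l_neq0 w_cvg; under eq_fun do rewrite sum_S_termD.
have lnS_cvg : (fun K => ln `|w K.+1|) @ \oo --> ln `|l|.
  by have := cvg_ln_norm l_neq0 w_cvg; rewrite -cvg_shiftS.
have ratio_cvg := cvg_ratioS l_neq0 w_cvg.
have rfun_cvg : (fun K => rfun (w K / w K.+1)) @ \oo --> rfun 1.
  apply: cvgB; first by apply: cvgB; [|exact: cvg_cst].
  exact: cvg_ln_norm (oner_neq0 R) ratio_cvg.
rewrite (_ : - (1 - beta) * _ = - (1 - beta) * (ln `|l| - ln `|w 0%N|)
    - beta * (ln `|l| - ln `|l|) + beta * rfun 1); last by rewrite rfun1 subrr; ring.
exact: cvgD (cvgB (cvgM (cvg_cst _) (cvgB lnS_cvg (cvg_cst _)))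
  (cvgM (cvg_cst _) (cvgB lnS_cvg (cvg_ln_norm l_neq0 w_cvg)))) (cvgM (cvg_cst _) rfun_cvg).
Qed.
End MomentumSequence.

Section HyperbolicCoordinates.
Variable R : realType.

Lemma norm_sqr_diff (a b : R) : `|a ^+ 2 - b ^+ 2| = `|a + b| * `|a - b|.
Proof. by rewrite subr_sqr normrM mulrC. Qed.

Lemma mul_sqr_norm_diff (a b : R) : a * b = 4^-1 * (`|a + b| ^+ 2 - `|a - b| ^+ 2).
Proof. by rewrite !real_normK ?num_real //; field. Qed.

Lemma sqr_norm_mul_expRN (p S : R) :
  (`|p| * expR (- S)) ^+ 2 = p ^+ 2 * expR (- (2 * S)).
Proof.
rewrite exprMn real_normK ?num_real // [expR _ ^+ 2]expr2 -expRD.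
by congr (_ * expR _); ring.
Qed.

Lemma norm_sqr_diff_rescale (a b a0 b0 Sp Sm c : R) :
  `|a0 + b0| * expR (- Sp) = `|a + b| * expR c ->
  `|a0 - b0| * expR (- Sm) = `|a - b| * expR (- c) ->
  `|a ^+ 2 - b ^+ 2| = `|a0 ^+ 2 - b0 ^+ 2| * expR (- (Sp + Sm)).
Proof.
move=> eq_p eq_m; rewrite !norm_sqr_diff opprD expRD mulrACA eq_p eq_m mulrACA.
by rewrite -expRD subrr expR0 mulr1.
Qed.

Lemma norm_mul_expRN (w l S c : R) : w != 0 -> l != 0 ->
  S = ln `|w| - ln `|l| - c -> `|w| * expR (- S) = `|l| * expR c.
Proof.
move=> w_neq0 l_neq0 ->.
rewrite (_ : - _ = ln `|l| + c + - ln `|w|); last by ring.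
rewrite !expRD expRN !lnK ?posrE ?normr_gt0 //; field.
by rewrite normr_eq0.
Qed.
End HyperbolicCoordinates.

Section MomentumPair.
Variables (R : realType) (gamma beta : R) (g u v : nat -> R).
Hypothesis u_rec :
  forall k, (1 <= k)%N -> u k.+1 = u k - gamma * g k * v k + beta * (u k - u k.-1).
Hypothesis v_rec :
  forall k, (1 <= k)%N -> v k.+1 = v k - gamma * g k * u k + beta * (v k - v k.-1).
Variables (a b : R).
Hypotheses (u_cvg : u @ \oo --> a) (v_cvg : v @ \oo --> b).

Lemma momentum_grad_cvg0 : 0 < gamma -> 0 < a ^+ 2 + b ^+ 2 -> g @ \oo --> 0.
Proof.
move=> gamma_gt0 ab_gt0.
have gv_cvg : (fun k => gamma * g k * v k) @ \oo --> 0.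
  apply: cvg_trans (cvg_momentum_increment beta u_cvg); apply: near_eq_cvg.
  by exists 1%N => // k /= k_ge1; rewrite u_rec //; ring.
have gu_cvg : (fun k => gamma * g k * u k) @ \oo --> 0.
  apply: cvg_trans (cvg_momentum_increment beta v_cvg); apply: near_eq_cvg.
  by exists 1%N => // k /= k_ge1; rewrite v_rec //; ring.
set den := fun k => gamma * (u k ^+ 2 + v k ^+ 2).
have den_lim_gt0 : 0 < gamma * (a ^+ 2 + b ^+ 2) by rewrite mulr_gt0.
have den_cvg : den @ \oo --> gamma * (a ^+ 2 + b ^+ 2).
  by apply: cvgM; [exact: cvg_cst | apply: cvgD; apply: cvgM].
have [N _ den_gt0] := cvgr_gt _ den_cvg _ den_lim_gt0.
have num_cvg : (fun k => gamma * g k * v k * v k + gamma * g k * u k * u k)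
    @ \oo --> 0 * b + 0 * a by apply: cvgD; apply: cvgM.
rewrite !mul0r addr0 in num_cvg.
have : (fun k => (gamma * g k * v k * v k + gamma * g k * u k * u k) / den k)
    @ \oo --> 0 * (gamma * (a ^+ 2 + b ^+ 2))^-1.
  exact: cvgM num_cvg (cvgV (lt0r_neq0 den_lim_gt0) den_cvg).
rewrite mul0r; apply: cvg_trans; apply: near_eq_cvg; exists N => // k /= le_Nk.
rewrite (_ : _ + _ = g k * den k); last by rewrite /den; ring.
by rewrite mulfK // gt_eqF // den_gt0.
Qed.

Hypotheses (u1 : u 1%N = u 0%N) (v1 : v 1%N = v 0%N).
Hypotheses (beta_ge0 : 0 <= beta) (beta_lt1 : beta < 1).
Hypotheses (p_neq0 : forall k, u k + v k != 0) (m_neq0 : forall k, u k - v k != 0).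
Hypotheses (ab_p_neq0 : a + b != 0) (ab_m_neq0 : a - b != 0).

Lemma momentum_S_limits : exists Sp Sm G : R,
  [/\ (fun K => (1 - beta)^-1 *
         \sum_(1 <= k < K) S_term beta (fun k => u k + v k) k) @ \oo --> Sp,
      (fun K => (1 - beta)^-1 *
         \sum_(1 <= k < K) S_term beta (fun k => u k - v k) k) @ \oo --> Sm,
      (fun K => \sum_(1 <= k < K.+1) gamma * g k) @ \oo --> G,
      `|u 0%N + v 0%N| * expR (- Sp) = `|a + b| * expR ((1 - beta)^-1 * G) &
      `|u 0%N - v 0%N| * expR (- Sm) = `|a - b| * expR (- ((1 - beta)^-1 * G))].
Proof.
pose p k := u k + v k; pose m k := u k - v k.
have p_cvg : p @ \oo --> a + b by apply: cvgD.
have m_cvg : m @ \oo --> a - b by apply: cvgB.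
have p1 : p 1%N = p 0%N by rewrite /p u1 v1.
have m1 : m 1%N = m 0%N by rewrite /m u1 v1.
have p_rec k : (1 <= k)%N -> p k.+1 = p k - gamma * g k * p k + beta * (p k - p k.-1).
  by move=> k_ge1; rewrite /p u_rec // v_rec //; ring.
have m_rec k : (1 <= k)%N -> m k.+1 = m k - - (gamma * g k) * m k + beta * (m k - m k.-1).
  by move=> k_ge1; rewrite /m u_rec // v_rec //; ring.
have p_sum := cvg_sum_S_termD p_neq0 p1 p_rec ab_p_neq0 p_cvg.
have m_sum := cvg_sum_S_termD m_neq0 m1 m_rec ab_m_neq0 m_cvg.
move: m_sum; under eq_fun do rewrite sumrN; move=> m_sum.
have [P TP_cvg G_cvg] := near_nondecreasing_cvg_split
  (near_nondecreasing_sum_S_term beta_ge0 ab_p_neq0 p_cvg)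
  (near_nondecreasing_sum_S_term beta_ge0 ab_m_neq0 m_cvg) p_sum m_sum.
set Lp := - (1 - beta) * _ in p_sum G_cvg; set Lm := - (1 - beta) * _ in m_sum.
have TM_cvg : (fun K => \sum_(1 <= k < K.+1) S_term beta m k) @ \oo --> Lm + (Lp - P).
  apply: cvg_trans (cvgD m_sum G_cvg); apply: near_eq_cvg; apply: nearW => K /=.
  by rewrite subrK.
have beta1_neq0 : 1 - beta != 0 by rewrite subr_eq0 eq_sym lt_eqF.
exists ((1 - beta)^-1 * P), ((1 - beta)^-1 * (Lm + (Lp - P))), (Lp - P); split => //.
- by rewrite -cvg_shiftS; exact: cvgM (cvg_cst _) TP_cvg.
- by rewrite -cvg_shiftS; exact: cvgM (cvg_cst _) TM_cvg.
- by apply: norm_mul_expRN => //; rewrite /Lp /p; field.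
- by apply: norm_mul_expRN => //; rewrite /Lm /m; field.
Qed.
End MomentumPair.

Section SMGD.
Variables (R : realType) (n d B : nat) (x : 'I_n -> 'I_d -> R) (y : 'I_n -> R).
Variables (gamma beta : R) (batch : nat -> 'I_B -> 'I_n) (u v : nat -> 'I_d -> R).
Variables (uinf vinf : 'I_d -> R).
Hypothesis u_rec : forall k : nat, (1 <= k)%N -> forall j : 'I_d,
  u k.+1 j = u k j
    - gamma * grad (batch_loss x y (batch k)) (fun i => u k i * v k i) j * v k j
    + beta * (u k j - u k.-1 j).
Hypothesis v_rec : forall k : nat, (1 <= k)%N -> forall j : 'I_d,
  v k.+1 j = v k j
    - gamma * grad (batch_loss x y (batch k)) (fun i => u k i * v k i) j * u k j
    + beta * (v k j - v k.-1 j).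
Hypothesis u_cvg : forall j, (fun k => u k j) @ \oo --> uinf j.
Hypothesis v_cvg : forall j, (fun k => v k j) @ \oo --> vinf j.
Hypothesis Dinf_neq0 : forall j, `|uinf j ^+ 2 - vinf j ^+ 2| != 0.

Lemma smgd_limit_neq0 j : uinf j + vinf j != 0 /\ uinf j - vinf j != 0.
Proof.
by move: (Dinf_neq0 j); rewrite norm_sqr_diff mulf_eq0 !normr_eq0 negb_or => /andP.
Qed.

Lemma smgd_grad_cvg0 j : 0 < gamma ->
  (fun k => grad (batch_loss x y (batch k)) (fun i => u k i * v k i) j) @ \oo --> 0.
Proof.
move=> gamma_gt0; have [uv_p uv_m] := smgd_limit_neq0 j.
apply: (momentum_grad_cvg0 (gamma := gamma) (beta := beta) (u := fun k => u k j)
  (v := fun k => v k j)) => //.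
- by move=> k k_ge1; exact: u_rec.
- by move=> k k_ge1; exact: v_rec.
- have : 0 < (uinf j + vinf j) ^+ 2 by rewrite exprn_even_gt0.
  by have := sqr_ge0 (uinf j - vinf j); lra.
Qed.

Lemma smgd_limit_interpolates : 0 < gamma -> (0 < B)%N ->
  (exists th_star, interpolators x y th_star) ->
  (forall (i : 'I_n) (N : nat), exists k m, (N <= k)%N /\ batch k m = i) ->
  interpolators x y (fun j => uinf j * vinf j).
Proof.
move=> gamma_gt0 B_gt0 interpolable freq.
apply: (limit_interpolates (th := fun k i => u k i * v k i) B_gt0 interpolable freq).
  by move=> j; exact: cvgM.
by move=> j; exact: smgd_grad_cvg0.
Qed.

Hypotheses (u1 : u 1%N = u 0%N) (v1 : v 1%N = v 0%N).
Hypotheses (beta_ge0 : 0 <= beta) (beta_lt1 : beta < 1).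
Hypothesis w_neq0 : forall k j, u k j + v k j != 0 /\ u k j - v k j != 0.

Lemma smgd_S_limits : exists Sp Sm G : 'I_d -> R, forall j,
  [/\ (fun K => (1 - beta)^-1 *
         \sum_(1 <= k < K) S_term beta (fun k => u k j + v k j) k) @ \oo --> Sp j,
      (fun K => (1 - beta)^-1 *
         \sum_(1 <= k < K) S_term beta (fun k => u k j - v k j) k) @ \oo --> Sm j,
      (fun K => \sum_(1 <= k < K.+1)
         gamma * grad (batch_loss x y (batch k)) (fun i => u k i * v k i) j) @ \oo --> G j,
      `|u 0%N j + v 0%N j| * expR (- Sp j) =
        `|uinf j + vinf j| * expR ((1 - beta)^-1 * G j) &
      `|u 0%N j - v 0%N j| * expR (- Sm j) =
        `|uinf j - vinf j| * expR (- ((1 - beta)^-1 * G j))].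
Proof.
have /choice [Sp /choice [Sm /choice [G SG]]] := fun j =>
  momentum_S_limits (u := fun k => u k j) (v := fun k => v k j)
    (fun k k_ge1 => @u_rec k k_ge1 j) (fun k k_ge1 => @v_rec k k_ge1 j)
    (@u_cvg j) (@v_cvg j) (congr1 (fun f => f j) u1) (congr1 (fun f => f j) v1)
    beta_ge0 beta_lt1 (fun k => (w_neq0 k j).1) (fun k => (w_neq0 k j).2)
    (smgd_limit_neq0 j).1 (smgd_limit_neq0 j).2.
by exists Sp, Sm, G.
Qed.
End SMGD.

Theorem theorem2 (R : realType) (n d B : nat)
  (x : 'I_n -> 'I_d -> R) (y : 'I_n -> R) (gamma beta : R)
  (batch : nat -> 'I_B -> 'I_n) (u v : nat -> 'I_d -> R)
  (uinf vinf : 'I_d -> R) :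
  0 < gamma -> 0 <= beta -> beta < 1 -> (0 < B)%N -> (B <= n)%N ->
  (* the dataset admits interpolators *)
  (exists th_star : 'I_d -> R, interpolators x y th_star) ->
  (* every sample index is drawn in infinitely many batches *)
  (forall (i : 'I_n) (N : nat), exists k m, (N <= k)%N /\ batch k m = i) ->
  u 1%N = u 0%N -> v 1%N = v 0%N ->
  (forall k : nat, (1 <= k)%N -> forall j : 'I_d,
     u k.+1 j = u k j
       - gamma * grad (batch_loss x y (batch k)) (fun i => u k i * v k i) j * v k j
       + beta * (u k j - u k.-1 j)) ->
  (forall k : nat, (1 <= k)%N -> forall j : 'I_d,
     v k.+1 j = v k j
       - gamma * grad (batch_loss x y (batch k)) (fun i => u k i * v k i) j * u k j
       + beta * (v k j - v k.-1 j)) ->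
  (forall j : 'I_d, (fun k => u k j) @ \oo --> uinf j) ->
  (forall j : 'I_d, (fun k => v k j) @ \oo --> vinf j) ->
  (forall j : 'I_d, `|uinf j ^+ 2 - vinf j ^+ 2| != 0) ->
  (forall (k : nat) (j : 'I_d), u k j + v k j != 0 /\ u k j - v k j != 0) ->
  let theta := fun j => uinf j * vinf j in
  let Dinf := fun j => `|uinf j ^+ 2 - vinf j ^+ 2| in
  interpolators x y theta /\
  exists Sp Sm : 'I_d -> R,
    (forall j : 'I_d,
       (fun K : nat => (1 - beta)^-1 *
          \sum_(1 <= k < K) S_term beta (fun k => u k j + v k j) k) @ \oo --> Sp j) /\
    (forall j : 'I_d,
       (fun K : nat => (1 - beta)^-1 *
          \sum_(1 <= k < K) S_term beta (fun k => u k j - v k j) k) @ \oo --> Sm j) /\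
    (forall j : 'I_d,
       Dinf j = `|u 0%N j ^+ 2 - v 0%N j ^+ 2| * expR (- (Sp j + Sm j))) /\
    (let th0 := fun j => 4^-1 * ((u 0%N j + v 0%N j) ^+ 2 * expR (- (2 * Sp j))
                                - (u 0%N j - v 0%N j) ^+ 2 * expR (- (2 * Sm j))) in
     forall th : 'I_d -> R, interpolators x y th -> th <> theta ->
       bregman (hyp_entropy Dinf) theta th0 < bregman (hyp_entropy Dinf) th th0).
Proof.
move=> gamma_gt0 beta_ge0 beta_lt1 B_gt0 _ interpolable freq u1 v1 u_rec v_rec
  u_cvg v_cvg Dinf_neq0 w_neq0 theta Dinf.
have theta_int : interpolators x y theta := smgd_limit_interpolates
  u_rec v_rec u_cvg v_cvg Dinf_neq0 gamma_gt0 B_gt0 interpolable freq.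
split=> //.
have [Sp [Sm [G SG]]] := smgd_S_limits u_rec v_rec u_cvg v_cvg Dinf_neq0
  u1 v1 beta_ge0 beta_lt1 w_neq0.
exists Sp, Sm; do 2 (split; first by move=> j; case: (SG j)); split.
  by move=> j; have [_ _ _ eq_p eq_m] := SG j; exact: norm_sqr_diff_rescale eq_p eq_m.
move=> th0 th th_int neq_th.
apply: (bregman_lt_of_grad_shift (c := fun j => (1 - beta)^-1 * G j)) => //.
- by move=> a b; apply: bregman_hyp_entropy_gt0 => j; rewrite lt0r Dinf_neq0 normr_ge0.
- move=> j; have [_ _ _ eq_p eq_m] := SG j.
  have [uv_p uv_m] := smgd_limit_neq0 Dinf_neq0 j.
  apply: (grad_hyp_entropy_expR_shift (A := `|uinf j + vinf j|) (B := `|uinf j - vinf j|));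
    rewrite ?normr_gt0 //.
  + by rewrite /Dinf norm_sqr_diff.
  + by rewrite /theta mul_sqr_norm_diff.
  + by rewrite /th0 -eq_p -eq_m !sqr_norm_mul_expRN.
- rewrite dotvZl (@dotv_partial_sums_eq0 _ _ (fun k j => gamma *
    grad (batch_loss x y (batch k)) (fun i => u k i * v k i) j)) ?mulr0 //.
    by move=> k; rewrite dotvZl dotv_grad_batch_loss_interpolators ?mulr0.
  by move=> j; case: (SG j).
Qed.
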